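(* Let $d,N,L\in\mathbb{N}$ with $d+2<N$, and let $W^{(0)}\in\mathbb{R}^{N\times d}$, $W^{(\ell)}\in\mathbb{R}^{N\times N}$ ($1\le\ell\le L-1$) and $b^{(0)},\dots,b^{(L-1)}\in\mathbb{R}^N$ be fixed. Let $\mathscr{D}=\{(D^{(L-1)}(x),\dots,D^{(0)}(x)):x\in\mathbb{R}^d\}$. Then $|\mathscr{D}|\le\left(\frac{eN}{d+1}\right)^{L(d+1)}$.
   Context: For $v\in\mathbb{R}^N$, $\Delta(v)$ is the $N\times N$ diagonal matrix with diagonal entries $\mathbb{1}_{v_i>0}$. For $x\in\mathbb{R}^d$ set $x^{(0)}=x$ and recursively $D^{(\ell)}(x)=\Delta(W^{(\ell)}x^{(\ell)}+b^{(\ell)})$, $x^{(\ell+1)}=\mathrm{ReLU}(W^{(\ell)}x^{(\ell)}+b^{(\ell)})$ for $0\le\ell<L$, where $\mathrm{ReLU}(t)=\max\{0,t\}$ componentwise. *)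

From HB Require Import structures.
From mathcomp Require Import all_boot all_order all_algebra.
From mathcomp Require Import all_classical all_reals all_analysis.
Set Implicit Arguments. Unset Strict Implicit. Unset Printing Implicit Defensive.
Import Order.TTheory GRing.Theory Num.Theory.
Local Open Scope ring_scope.

Definition relu (R : realType) (n : nat) (v : 'cV[R]_n) : 'cV[R]_n :=
  map_mx (fun t => Num.max 0 t) v.

Definition Delta (R : realType) (n : nat) (v : 'cV[R]_n) : 'M[R]_n :=
  diag_mx (\row_i (if 0 < v i 0 then 1 else 0)).

(* Pre-activations z^(l) = W^(l) x^(l) + b^(l), with x^(0) = x and
   x^(l+1) = ReLU(z^(l)).  W0 is W^(0) (N x d); W l is W^(l) for l >= 1
   (W 0 is unused); b l is b^(l). *)
Fixpoint preact (R : realType) (d N : nat) (W0 : 'M[R]_(N, d))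
  (W : nat -> 'M[R]_N) (b : nat -> 'cV[R]_N) (x : 'cV[R]_d) (l : nat)
  : 'cV[R]_N :=
  match l with
  | 0 => W0 *m x + b 0%N
  | l'.+1 => W l *m relu (preact W0 W b x l') + b l
  end.

Definition pattern (R : realType) (d N L : nat) (W0 : 'M[R]_(N, d))
  (W : nat -> 'M[R]_N) (b : nat -> 'cV[R]_N) (x : 'cV[R]_d)
  : {ffun 'I_L -> 'M[R]_N} :=
  [ffun l : 'I_L => Delta (preact W0 W b x l)].

Definition patterns (R : realType) (d N L : nat) (W0 : 'M[R]_(N, d))
  (W : nat -> 'M[R]_N) (b : nat -> 'cV[R]_N) : set {ffun 'I_L -> 'M[R]_N} :=
  range (@pattern R d N L W0 W b).

(* Fix the activation patterns of the first k layers.  On the inputs realising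
   a given prefix every ReLU acts as a fixed diagonal 0/1 matrix, so the
   pre-activation of layer k is an affine map x |-> M x + c.  The positivity
   sets of an affine map R^d -> R^N shatter no d + 2 coordinates (a linear
   dependence among d + 2 rows of [M c] produces a sign contradiction), so by
   the Sauer-Shelah lemma, in Pajor's form, at most
   sum_(i <= d+1) C(N, i) <= (eN/(d+1))^(d+1) patterns of layer k extend each
   prefix.  Multiplying over the L layers gives the bound. *)

From HB Require Import structures.
From mathcomp Require Import all_boot all_order all_algebra.
From mathcomp Require Import all_classical all_reals all_analysis.
From mathcomp Require Import finmap.
From mathcomp Require Import unstable.
From mathcomp Require Import fintype finset.
Import Order.TTheory GRing.Theory Num.Theory.
Set Implicit Arguments. Unset Strict Implicit. Unset Printing Implicit Defensive.

Section Shattering.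
Variable T : finType.
Implicit Types (F : {set {set T}}) (A B S : {set T}) (a : T).

Definition shatters F A : bool :=
  [forall B : {set T}, (B \subset A) ==> [exists S in F, S :&: A == B]].

Definition shattered F : {set {set T}} := [set A | shatters F A].

Lemma shattersP F A :
  reflect (forall B, B \subset A -> exists2 S, S \in F & S :&: A = B) (shatters F A).
Proof.
apply: (iffP forallP) => [shA B sBA | shA B]; last first.
  apply/implyP => /shA [S SF SA]; apply/existsP; exists S; by rewrite SF SA eqxx.
by have /existsP [S /andP [SF /eqP SA]] := implyP (shA B) sBA; exists S.
Qed.

Lemma shattersS F1 F2 A : F1 \subset F2 -> shatters F1 A -> shatters F2 A.
Proof.
move=> sF12 /shattersP shA; apply/shattersP => B /shA [S SF SA].
by exists S; first exact: (subsetP sF12).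
Qed.

Lemma shatters_set0 F : F != set0 -> shatters F set0.
Proof.
case/set0Pn => S SF; apply/shattersP => B; rewrite subset0 => /eqP ->.
by exists S; rewrite ?setI0.
Qed.

Lemma shatters_const_notin F a A b :
  (forall S, S \in F -> (a \in S) = b) -> shatters F A -> a \notin A.
Proof.
move=> aF /shattersP /(_ (if b then set0 else A)) [|S SF /setP /(_ a)].
  by case: b {aF}; rewrite ?sub0set.
rewrite inE aF //; case: b {aF} => /= [|<-] //.
by rewrite inE => ->.
Qed.

Lemma shatters_setU1 F0 F1 a A :
  (forall S, S \in F0 -> (a \in S) = false) -> (forall S, S \in F1 -> a \in S) ->
  shatters F0 A -> shatters F1 A -> shatters (F0 :|: F1) (a |: A).
Proof.
move=> aF0 aF1 sh0 sh1; apply/shattersP => B sBaA.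
have [S SF SA] : exists2 S, S \in (if a \in B then F1 else F0) & S :&: A = B :\ a.
  by case: (a \in B); [move/shattersP: sh1 | move/shattersP: sh0]; apply;
    rewrite subDset.
exists S; first by case: (a \in B) SF; rewrite inE => ->; rewrite ?orbT.
apply/setP => y; rewrite !inE; case: (eqVneq y a) => [->|ya] /=.
  by case: (a \in B) SF => SF; [rewrite aF1 | rewrite aF0].
by move/setP: SA => /(_ y); rewrite !inE ya.
Qed.

Lemma card_shattered_split F a :
  #|shattered [set S in F | a \notin S]| + #|shattered [set S in F | a \in S]|
    <= #|shattered F|.
Proof.
set F0 := [set S in F | a \notin S]; set F1 := [set S in F | a \in S].
have aF0 S : S \in F0 -> (a \in S) = false by rewrite inE => /andP [_ /negbTE].
have aF1 S : S \in F1 -> a \in S by rewrite inE => /andP [].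
have F01 : F0 :|: F1 = F by apply/setP => S; rewrite !inE -andb_orr orNb andbT.
set X := shattered F0; set Y := shattered F1; set Z := [set a |: A | A in X :&: Y].
have aXY A : A \in X :|: Y -> a \notin A.
  by rewrite !inE => /orP [/(shatters_const_notin aF0) | /(shatters_const_notin aF1)].
have sXY : X :|: Y \subset shattered F.
  apply/subsetP => A; rewrite !inE -F01 => /orP [] shA; apply: shattersS shA.
    exact: subsetUl.
  exact: subsetUr.
have sZ : Z \subset shattered F.
  apply/subsetP => C /imsetP [A]; rewrite !inE => /andP [sh0 sh1] ->.
  by rewrite -F01 shatters_setU1.
have cardZ : #|Z| = #|X :&: Y|.
  apply: card_in_imset => A B /setIP [AX _] /setIP [BX _] eqAB.
  have [aA aB] : a \notin A /\ a \notin B by split; apply: aXY; rewrite inE ?AX ?BX.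
  by rewrite -(setU1K aA) -(setU1K aB) eqAB.
have dXYZ : [disjoint X :|: Y & Z].
  rewrite disjoint_subset; apply/subsetP => C /aXY naC; rewrite inE.
  by apply: contra naC => /imsetP [A _ ->]; rewrite setU11.
rewrite -cardsUI -cardZ; have := cardsUI (X :|: Y) Z.
rewrite disjoint_setI0 // cards0 addn0 => <-.
by apply: subset_leq_card; rewrite subUset sXY.
Qed.

Lemma card_le_shattered F : #|F| <= #|shattered F|.
Proof.
elim: {F}_.+1 {-2}F (ltnSn #|F|) => // n IH F; rewrite ltnS => leFn.
have [F_le1 | /card_gt1P [S1 [S2 [S1F S2F neqS]]]] := leqP #|F| 1.
  have [-> | /set0Pn [S SF]] := eqVneq F set0; first by rewrite cards0.
  apply: leq_trans F_le1 _; rewrite card_gt0; apply/set0Pn; exists set0.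
  by rewrite inE shatters_set0 //; apply/set0Pn; exists S.
have /existsP [a Sa] : [exists a, (a \in S1) != (a \in S2)].
  apply: contraNT neqS => /existsPn eqS; apply/eqP/setP => a.
  by move/negPn/eqP: (eqS a).
set F0 := [set S in F | a \notin S]; set F1 := [set S in F | a \in S].
have cardF : #|F0| + #|F1| = #|F|.
  rewrite -(cardsID [set S : {set T} | a \in S] F) addnC.
  by congr (_ + _); apply: eq_card => S; rewrite !inE andbC.
have [F0_gt0 F1_gt0] : 0 < #|F0| /\ 0 < #|F1|.
  move: Sa; case aS1: (a \in S1); case aS2: (a \in S2) => // _;
    split; apply/card_gt0P; [exists S2 | exists S1 | exists S1 | exists S2];
    by rewrite inE ?S1F ?S2F ?aS1 ?aS2.
rewrite -cardF; apply: leq_trans (card_shattered_split F a).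
rewrite leq_add // IH //; apply: leq_trans leFn; rewrite -cardF.
  by rewrite -addn1 leq_add2l.
by rewrite -add1n leq_add2r.
Qed.

Lemma card_sets_leq k :
  #|[set A : {set T} | #|A| <= k]| <= \sum_(i < k.+1) 'C(#|T|, i).
Proof.
have -> : [set A : {set T} | #|A| <= k] = \bigcup_(i < k.+1) [set A : {set T} | #|A| == i].
  apply/setP => A; rewrite inE; apply/idP/bigcupP => [leAk | [i _]].
    by exists (Ordinal (leAk : #|A| < k.+1)); rewrite ?inE.
  by rewrite inE => /eqP ->; rewrite -ltnS.
apply: leq_trans (card_big_setU _ _ _) _.
by apply: leq_sum => i _; rewrite card_draws.
Qed.

Lemma sauer_shelah F k : (forall A, shatters F A -> #|A| <= k) ->
  #|F| <= \sum_(i < k.+1) 'C(#|T|, i).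
Proof.
move=> small; apply: leq_trans (card_le_shattered F) (leq_trans _ (card_sets_leq k)).
by apply: subset_leq_card; apply/subsetP => A; rewrite !inE => /small.
Qed.

End Shattering.

Local Open Scope ring_scope.

Section SignPatterns.
Variable R : realFieldType.

Definition pos_set n (z : 'cV[R]_n) : {set 'I_n} := [set i | 0 < z i 0].

Lemma annihilated_not_shatters n (F : {set {set 'I_n}}) (T : {set 'I_n}) (lam : 'rV[R]_n) :
  (forall S, S \in F -> exists2 z, S = pos_set z & lam *m z = 0) ->
  (forall i, i \notin T -> lam 0 i = 0) -> lam != 0 -> ~~ shatters F T.
Proof.
move=> Fann lamT nz_lam.
wlog [i0 lam_i0] : lam Fann lamT nz_lam / exists i0, 0 < lam 0 i0.
  move=> wlog_pos; have [i0 lam_i0] : exists i0, lam 0 i0 != 0.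
    by apply/existsP; apply: contraNT nz_lam => /existsPn lam0; apply/eqP/rowP => i;
      rewrite mxE; apply/eqP/negPn/lam0.
  have [neg_i0 | pos_i0] := ltrP (lam 0 i0) 0; last first.
    by apply: (wlog_pos lam) => //; exists i0; rewrite lt_neqAle eq_sym lam_i0.
  apply: (wlog_pos (- lam)); last by exists i0; rewrite mxE oppr_gt0.
  - by move=> S /Fann [z Sz lamz]; exists z; rewrite // mulNmx lamz oppr0.
  - by move=> i /lamT; rewrite mxE => ->; rewrite oppr0.
  - by rewrite oppr_eq0.
have i0T : i0 \in T by apply: contraLR lam_i0 => /lamT ->; rewrite ltxx.
apply/negP => /shattersP /(_ [set i in T | 0 < lam 0 i]) [].
  by apply/subsetP => i; rewrite inE => /andP [].
move=> S SF /setP SA; have [z Sz lamz] := Fann S SF; subst S.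
have sign_lam i : i \in T -> (0 < z i 0) = (0 < lam 0 i).
  by move=> iT; have := SA i; rewrite !inE iT andbT.
have term_ge0 i : 0 <= lam 0 i * z i 0.
  have [iT | /lamT ->] := boolP (i \in T); last by rewrite mul0r.
  have := sign_lam i iT; have [lam_pos | lam_npos] := ltrP 0 (lam 0 i).
    by move=> z_pos; rewrite mulr_ge0 // ltW // z_pos.
  by move/negbT; rewrite -leNgt => z_npos; rewrite mulr_le0.
have : 0 < (lam *m z) 0 0.
  rewrite mxE (bigD1 i0) //= ltr_wpDr ?sumr_ge0 //.
  by rewrite mulr_gt0 // sign_lam.
by rewrite lamz mxE ltxx.
Qed.

Lemma exists_kernel_vector m n (A : 'M[R]_(m, n)) :
  (n < m)%N -> exists2 u : 'rV_m, u != 0 & u *m A = 0.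
Proof.
move=> ltnm; exists (nz_row (kermx A)); last exact/sub_kermxP/nz_row_sub.
rewrite nz_row_eq0 kermx_eq0 /row_free; apply: contraTN ltnm => /eqP <-.
by rewrite -leqNgt rank_leq_col.
Qed.

Lemma exists_kernel_vector_on m n (A : 'M[R]_(m, n)) (T : {set 'I_m}) :
  (n < #|T|)%N ->
  exists lam : 'rV_m, [/\ lam != 0, lam *m A = 0 & forall i, i \notin T -> lam 0 i = 0].
Proof.
move=> ltnT; pose P : 'M[R]_(#|T|, m) := \matrix_(t, i) (enum_val t == i)%:R.
have [mu mu_nz muPA] := exists_kernel_vector (P *m A) ltnT.
have Pmu t : (mu *m P) 0 (enum_val t) = mu 0 t.
  rewrite mxE (bigD1 t) //= big1 ?addr0 => [|t' neq_t't]; first by rewrite mxE eqxx mulr1.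
  by rewrite mxE (inj_eq enum_val_inj) (negbTE neq_t't) mulr0.
exists (mu *m P); split; last 1 first.
- move=> i iT; rewrite mxE big1 // => t _; rewrite mxE.
  by case: eqP => [eq_ti | _]; [case/negP: iT; rewrite -eq_ti enum_valP | rewrite mulr0].
- by apply: contra_neq mu_nz => muP0; apply/rowP => t; rewrite mxE -Pmu muP0 mxE.
- by rewrite -mulmxA.
Qed.

Section AffineSignPatterns.
Variables (d n : nat) (M : 'M[R]_(n, d)) (c : 'cV[R]_n).
Variable F : {set {set 'I_n}}.
Hypothesis F_affine : forall S, S \in F -> exists x, S = pos_set (M *m x + c).

Lemma affine_shatters_small (T : {set 'I_n}) : shatters F T -> (#|T| <= d.+1)%N.
Proof.
rewrite leqNgt; apply: contraL; rewrite -addn1 => ltT.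
have [lam [nz_lam lamMc lamT]] := exists_kernel_vector_on (row_mx M c) ltT.
apply: (annihilated_not_shatters _ lamT nz_lam) => S /F_affine [x ->].
exists (M *m x + c) => //.
by rewrite -[c]mulmx1 -mul_row_col mulmxA lamMc mul0mx.
Qed.

Lemma card_affine_pos_sets : (#|F| <= \sum_(i < d.+2) 'C(n, i))%N.
Proof. by have := sauer_shelah affine_shatters_small; rewrite card_ord. Qed.

End AffineSignPatterns.

End SignPatterns.

Section PrefixCounting.
Variables (X : Type) (T : finType) (L : nat) (t0 : T) (g : X -> {ffun 'I_L -> T}).
Variable B : nat.

Definition prefix (k : nat) (f : {ffun 'I_L -> T}) : {ffun 'I_L -> T} :=
  [ffun l : 'I_L => if (l < k)%N then f l else t0].

Definition prefixes (k : nat) : {set {ffun 'I_L -> T}} :=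
  [set s | `[< exists x, prefix k (g x) = s >]].

Hypothesis card_next : forall (k : 'I_L) x0,
  (#|[set t | `[< exists2 x, prefix k (g x) = prefix k (g x0) & g x k = t >]]| <= B)%N.

Lemma card_prefixes k : (k <= L)%N -> (#|prefixes k| <= B ^ k)%N.
Proof.
elim: k => [_ | k IH ltkL].
  rewrite expn0 -(cards1 ([ffun=> t0] : {ffun 'I_L -> T})); apply/subset_leq_card/subsetP => s.
  by rewrite !inE => /asboolP [x <-]; apply/eqP/ffunP => l; rewrite !ffunE.
pose kk := Ordinal ltkL.
pose next s := [set t | `[< exists2 x, prefix k (g x) = s & g x kk = t >]].
pose extend (s : {ffun 'I_L -> T}) (t : T) : {ffun 'I_L -> T} :=
  [ffun l => if l == kk then t else s l].
have sub_ext : prefixes k.+1 \subset \bigcup_(s in prefixes k) extend s @: next s.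
  apply/subsetP => _ /[!inE] /asboolP [x <-]; apply/bigcupP; exists (prefix k (g x)).
    by rewrite inE; apply/asboolP; exists x.
  apply/imsetP; exists (g x kk); first by rewrite inE; apply/asboolP; exists x.
  apply/ffunP => l; rewrite !ffunE ltnS leq_eqVlt.
  case: (eqVneq l kk) => [-> | neq_lk] /=; first by rewrite eqxx.
  by move: neq_lk; rewrite -val_eqE /= => /negbTE ->.
apply: leq_trans (subset_leq_card sub_ext) _; apply: leq_trans (card_big_setU _ _ _) _.
apply: (@leq_trans (\sum_(s in prefixes k) B)).
  apply: leq_sum => s /[!inE] /asboolP [x0 <-].
  exact: leq_trans (leq_imset_card _ _) (card_next kk x0).
by rewrite sum_nat_const expnSr leq_mul2r IH ?orbT // ltnW.
Qed.

Lemma card_range_le : (#|` fset_set (range g)| <= B ^ L)%N.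
Proof.
have prefixL f : prefix L f = f by apply/ffunP => l; rewrite ffunE ltn_ord.
have -> : #|` fset_set (range g)| = #|prefixes L|.
  rewrite -card_finset; congr #|` _|; apply/fsetP => s.
  rewrite in_fset_set ?in_fset /= ?inE; last exact: finite_finset.
  apply/idP/asboolP => [/set_mem [x _ <-] | [x <-]]; first by exists x.
  by apply: mem_set; exists x; rewrite ?prefixL.
exact: card_prefixes.
Qed.

End PrefixCounting.

Lemma sum_binomial_le_expR (R : realType) (n k : nat) : (0 < k)%N -> (k <= n)%N ->
  ((\sum_(i < k.+1) 'C(n, i))%:R : R) <= (expR 1 * n%:R / k%:R) ^+ k.
Proof.
move=> k_gt0 le_kn.
have k_pos : (0 : R) < k%:R by rewrite ltr0n.
have n_pos : (0 : R) < n%:R by rewrite ltr0n (leq_trans k_gt0).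
(* Weigh the sum with t ^+ i, t = k / n <= 1, and compare with
   (1 + t) ^+ n <= expR (t * n) = expR k. *)
pose t : R := k%:R / n%:R.
have t_pos : 0 < t by rewrite divr_gt0.
have t_le1 : t <= 1 by rewrite ler_pdivrMr // mul1r ler_nat.
have lower : (\sum_(i < k.+1) 'C(n, i))%:R * t ^+ k <= \sum_(i < k.+1) 'C(n, i)%:R * t ^+ i.
  rewrite natr_sum mulr_suml; apply: ler_sum => i _; rewrite ler_wpM2l //.
  by apply: (ler_wiXn2l (ltW t_pos) t_le1); rewrite -ltnS.
have binomial : \sum_(i < k.+1) 'C(n, i)%:R * t ^+ i <= (t + 1) ^+ n.
  rewrite exprD1n (big_ord_widen n.+1 (fun i => 'C(n, i)%:R * t ^+ i)) ?ltnS //.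
  rewrite [X in _ <= X](bigID (fun i : 'I_n.+1 => (i < k.+1)%N)) /=.
  under [X in _ <= X + _]eq_bigr do rewrite -mulr_natl.
  by rewrite lerDl sumr_ge0 // => i _; rewrite mulrn_wge0 // exprn_ge0 // ltW.
have upper : (t + 1) ^+ n <= expR 1 ^+ k.
  apply: (@le_trans _ _ (expR t ^+ n)).
    apply: lerXn2r; rewrite ?nnegrE ?expR_ge0 ?addr_ge0 ?(ltW t_pos) //.
    by rewrite addrC expR_ge1Dx.
  by rewrite -expRM_natr /t divfK ?gt_eqF // -expRM_natl mulr1.
have := le_trans lower (le_trans binomial upper).
rewrite -ler_pdivlMr ?exprn_gt0 // => /le_trans; apply.
by rewrite -expr_div_n /t invf_div mulrA.
Qed.

Section ReluNetwork.
Variables (R : realType) (d N L : nat) (W0 : 'M[R]_(N, d)).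
Variables (W : nat -> 'M[R]_N) (b : nat -> 'cV[R]_N).

Definition diag_set (S : {set 'I_N}) : 'M[R]_N :=
  diag_mx (\row_i (if i \in S then 1 else 0)).

Lemma Delta_pos_set (z : 'cV[R]_N) : Delta z = diag_set (pos_set z).
Proof. by congr diag_mx; apply/rowP => i; rewrite !mxE inE. Qed.

Lemma relu_Delta (z : 'cV[R]_N) : relu z = Delta z *m z.
Proof.
apply/matrixP => i j; rewrite mul_diag_mx !mxE (ord1 j).
by case: ltrP => z_i; rewrite ?mul1r ?mul0r // max_r // ltW.
Qed.

Lemma preact_affine k x0 : exists (M : 'M[R]_(N, d)) (c : 'cV[R]_N), forall x,
  (forall l, (l < k)%N -> pos_set (preact W0 W b x l) = pos_set (preact W0 W b x0 l)) ->
  preact W0 W b x k = M *m x + c.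
Proof.
elim: k => [|k [M [c IH]]]; first by exists W0, (b 0%N).
pose D := Delta (preact W0 W b x0 k).
exists (W k.+1 *m D *m M), (W k.+1 *m D *m c + b k.+1) => x same_pos /=.
rewrite relu_Delta Delta_pos_set same_pos // -Delta_pos_set -/D (IH x).
  by rewrite !mulmxDr !mulmxA addrA.
by move=> l lt_lk; apply/same_pos/ltnW.
Qed.

Definition pos_pattern (x : 'cV[R]_d) : {ffun 'I_L -> {set 'I_N}} :=
  [ffun l : 'I_L => pos_set (preact W0 W b x l)].

Lemma card_next_pos_set (k : 'I_L) x0 :
  (#|[set S | `[< exists2 x, prefix set0 k (pos_pattern x) = prefix set0 k (pos_pattern x0)
                           & pos_pattern x k = S >]]| <= \sum_(i < d.+2) 'C(N, i))%N.
Proof.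
have [M [c Mc]] := preact_affine k x0.
apply: card_affine_pos_sets => S /[!inE] /asboolP [x same_prefix <-].
exists x; rewrite ffunE Mc // => l lt_lk.
move/ffunP: same_prefix => /(_ (Ordinal (ltn_trans lt_lk (ltn_ord k)))).
by rewrite !ffunE /= lt_lk.
Qed.

End ReluNetwork.

Local Open Scope classical_set_scope.
Local Open Scope fset_scope.

Theorem lemma5p7 (R : realType) (d N L : nat) (hdN : (d + 2 < N)%N)
  (W0 : 'M[R]_(N, d)) (W : nat -> 'M[R]_N) (b : nat -> 'cV[R]_N) :
  finite_set (@patterns R d N L W0 W b) /\
  (#|` fset_set (@patterns R d N L W0 W b) |%:R : R)
    <= (expR 1 * N%:R / (d.+1)%:R) ^+ (L * d.+1).
Proof.
pose g := @pos_pattern R d N L W0 W b.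
pose diag_pattern (s : {ffun 'I_L -> {set 'I_N}}) := [ffun l => diag_set R (s l)].
have -> : patterns W0 W b = (diag_pattern @` range g)%classic.
  rewrite image_comp; apply: eq_imagel => x _ /=.
  by apply/ffunP => l; rewrite !ffunE Delta_pos_set.
have g_fin : finite_set (range g) := finite_finset.
split; first exact: finite_image.
rewrite fset_set_image //; apply: (@le_trans _ _ ((\sum_(i < d.+2) 'C(N, i)) ^ L)%:R).
  rewrite ler_nat; apply: leq_trans (leq_imfset_card _ _ _) _.
  exact/card_range_le/card_next_pos_set.
have le_dN : (d.+1 <= N)%N by apply: leq_trans (ltnW hdN); rewrite addn2.
rewrite natrX mulnC exprM lerXn2r ?nnegrE ?ler0n ?exprn_ge0 ?sum_binomial_le_expR //.
Qed.
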